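(* Let $\mathcal P$ be a Fitting program over a bilattice $\mathcal B$ and $\alpha\in\{\mathcal F,\mathcal T,\mathcal U,\mathcal I\}$. Then $\Psi'^{\alpha}_{\mathcal P}$ has a least fixpoint, denoted $Fix^{\alpha}_{\mathcal U}$, and a greatest fixpoint, denoted $Fix^{\alpha}_{\mathcal I}$, with respect to the knowledge ordering $\le_k$ on $\mathcal V(\mathcal B)$.
   Context: A bilattice $\langle\mathcal B,\le_t,\le_k\rangle$ is a nonempty set with two partial orders, each making $\mathcal B$ a lattice with top and bottom. Under $\le_t$, meet and join are $\wedge,\vee$ (infinitary $\bigwedge,\bigvee$), bottom $\mathcal F$, top $\mathcal T$; under $\le_k$, meet and join are $\otimes,\oplus$ (infinitary $\bigotimes,\bigoplus$), bottom $\mathcal U$, top $\mathcal I$. Standing assumptions: $\mathcal B$ is complete for both orders, infinitely distributive, satisfies the infinitary interlacing conditions (each of $\wedge,\vee,\otimes,\oplus$ and their infinitary versions is monotone w.r.t. both orderings), and has a negation $\neg$ (an involution reversing $\le_t$ and preserving $\le_k$). A formula is built from literals ($A$ or $\neg A$) and elements of $\mathcal B$ using $\wedge,\vee,\otimes,\oplus,\exists,\forall$ (with built-in predicate $equal$). A clause is $P(x_1,\dots,x_n)\leftarrow\phi(x_1,\dots,x_n)$ with the body's free variables among $x_1,\dots,x_n$. A Fitting program is a finite set of clauses with no predicate letter heading more than one clause; Inst-$\mathcal P$ is its set of ground instances. $\mathcal V(\mathcal B)$: maps from ground atoms to $\mathcal B$, with pointwise orders/operations. Valuations extend to closed formulas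 compositionally ($v(\beta)=\beta$, connectives pointwise, $\exists$ as $\bigvee$, $\forall$ as $\bigwedge$ over closed-term instances, $v(equal(s,t))=\mathcal T$ if $s=t$ else $\mathcal F$). The contrajoin $v\bigtriangleup w$ evaluates likewise but gives $A$ the value $v(A)$ and $\neg A$ the value $\neg w(A)$. $\Psi_{\mathcal P}^{\alpha}(v,w)(A)=\alpha$ if $A$ heads no member of Inst-$\mathcal P$, and $=(v\bigtriangleup w)(B)$ if $A\leftarrow B\in$ Inst-$\mathcal P$. With $v_\alpha$ the constant valuation $\alpha$, $\Psi'^{\alpha}_{\mathcal P}(v)$ is the limit of $a_0=v_\alpha$, $a_{n+1}=\Psi_{\mathcal P}^{\alpha}(a_n,v)$, $a_\lambda=\bigvee_{n<\lambda}$ (resp. $\bigwedge,\bigoplus,\bigotimes$) of $\Psi_{\mathcal P}^{\alpha}(a_n,v)$ for limit $\lambda$ when $\alpha=\mathcal F$ (resp. $\mathcal T,\mathcal U,\mathcal I$); equivalently the $\le_t$-least (resp. $\le_t$-greatest, $\le_k$-least, $\le_k$-greatest) fixpoint of $x\mapsto\Psi_{\mathcal P}^{\alpha}(x,v)$. *)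

From Stdlib Require Import List Arith Bool.
Import ListNotations.
Set Implicit Arguments.

Definition img {I T : Type} (f : I -> T) : T -> Prop := fun z => exists i, z = f i.

Definition bin {T : Type} (O : (T -> Prop) -> T) (x y : T) : T :=
  O (fun z => z = x \/ z = y).

Definition fam_mono {T : Type} (O : (T -> Prop) -> T) (R : T -> T -> Prop) : Prop :=
  forall (I : Type) (f g : I -> T), (forall i, R (f i) (g i)) -> R (O (img f)) (O (img g)).

Definition distr {T : Type} (O2 O : (T -> Prop) -> T) : Prop :=
  forall (I : Type) (f : I -> T) (x : T), inhabited I ->
    bin O2 x (O (img f)) = O (img (fun i => bin O2 x (f i))).

Definition is_porder {T : Type} (R : T -> T -> Prop) : Prop :=
  (forall x, R x x) /\ (forall x y z, R x y -> R y z -> R x z) /\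
  (forall x y, R x y -> R y x -> x = y).

Definition is_sup {T : Type} (R : T -> T -> Prop) (O : (T -> Prop) -> T) : Prop :=
  forall S, (forall x, S x -> R x (O S)) /\ (forall y, (forall x, S x -> R x y) -> R (O S) y).

Definition is_inf {T : Type} (R : T -> T -> Prop) (O : (T -> Prop) -> T) : Prop :=
  forall S, (forall x, S x -> R (O S) x) /\ (forall y, (forall x, S x -> R y x) -> R y (O S)).

Record bilattice := Bilattice {
  bcar :> Type;
  le_t : bcar -> bcar -> Prop;
  le_k : bcar -> bcar -> Prop;
  sup_t : (bcar -> Prop) -> bcar;
  inf_t : (bcar -> Prop) -> bcar;
  sup_k : (bcar -> Prop) -> bcar;
  inf_k : (bcar -> Prop) -> bcar;
  neg : bcar -> bcar;
  le_t_porder : is_porder le_t;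
  le_k_porder : is_porder le_k;
  sup_t_spec : is_sup le_t sup_t;
  inf_t_spec : is_inf le_t inf_t;
  sup_k_spec : is_sup le_k sup_k;
  inf_k_spec : is_inf le_k inf_k;
  sup_t_mono_t : fam_mono sup_t le_t;  sup_t_mono_k : fam_mono sup_t le_k;
  inf_t_mono_t : fam_mono inf_t le_t;  inf_t_mono_k : fam_mono inf_t le_k;
  sup_k_mono_t : fam_mono sup_k le_t;  sup_k_mono_k : fam_mono sup_k le_k;
  inf_k_mono_t : fam_mono inf_k le_t;  inf_k_mono_k : fam_mono inf_k le_k;
  d_meett_joint : distr inf_t sup_t; d_meett_joink : distr inf_t sup_k;
  d_meett_meetk : distr inf_t inf_k;
  d_joint_meett : distr sup_t inf_t; d_joint_joink : distr sup_t sup_k;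
  d_joint_meetk : distr sup_t inf_k;
  d_meetk_joink : distr inf_k sup_k; d_meetk_joint : distr inf_k sup_t;
  d_meetk_meett : distr inf_k inf_t;
  d_joink_meetk : distr sup_k inf_k; d_joink_joint : distr sup_k sup_t;
  d_joink_meett : distr sup_k inf_t;
  neg_invol : forall x, neg (neg x) = x;
  neg_anti_t : forall x y, le_t x y -> le_t (neg y) (neg x);
  neg_mono_k : forall x y, le_k x y -> le_k (neg x) (neg y)
}.

Arguments le_t {b}. Arguments le_k {b}. Arguments sup_t {b}. Arguments inf_t {b}.
Arguments sup_k {b}. Arguments inf_k {b}. Arguments neg {b}.

Definition bF {B : bilattice} : B := sup_t (fun _ => False).
Definition bT {B : bilattice} : B := inf_t (fun _ => False).
Definition bU {B : bilattice} : B := sup_k (fun _ => False).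
Definition bI {B : bilattice} : B := inf_k (fun _ => False).

Inductive alpha := aF | aT | aU | aI.

Definition alpha_val {B : bilattice} (a : alpha) : B :=
  match a with aF => bF | aT => bT | aU => bU | aI => bI end.

Inductive term (Fn : Type) : Type :=
| Var (n : nat)
| App (f : Fn) (args : list (term Fn)).
Arguments Var {Fn}.

Section Syntax.
Context {Fn Pr : Type} (far : Fn -> nat) (par : Pr -> nat).

Fixpoint gterm (t : term Fn) : bool :=
  match t with
  | Var _ => false
  | App f l => (length l =? far f) &&
      (fix aux (l : list (term Fn)) : bool :=
         match l with [] => true | t :: l => gterm t && aux l end) l
  end.

Fixpoint wfterm (t : term Fn) : bool :=
  match t with
  | Var _ => true
  | App f l => (length l =? far f) &&
      (fix aux (l : list (term Fn)) : bool :=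
         match l with [] => true | t :: l => wfterm t && aux l end) l
  end.

Definition atom : Type := (Pr * list (term Fn))%type.

Definition gatomb (a : atom) : bool :=
  (length (snd a) =? par (fst a)) && forallb gterm (snd a).

Definition gatom : Type := { a : atom | gatomb a = true }.

End Syntax.

Fixpoint occurs {Fn : Type} (x : nat) (t : term Fn) : Prop :=
  match t with
  | Var n => n = x
  | App _ l =>
      (fix aux (l : list (term Fn)) : Prop :=
         match l with [] => False | t :: l => occurs x t \/ aux l end) l
  end.

Fixpoint tsubst {Fn : Type} (s : nat -> term Fn) (t : term Fn) : term Fn :=
  match t with
  | Var n => s n
  | App f l => App f (map (tsubst s) l)
  end.

Definition upd {Fn : Type} (s : nat -> term Fn) (x : nat) (t : term Fn) : nat -> term Fn :=
  fun n => if n =? x then t else s n.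

Inductive formula (C Fn Pr : Type) : Type :=
| FLit (pos : bool) (p : Pr) (args : list (term Fn))
| FEq (pos : bool) (s t : term Fn)
| FConst (c : C)
| FAnd (a b : formula C Fn Pr)
| FOr (a b : formula C Fn Pr)
| FOtimes (a b : formula C Fn Pr)
| FOplus (a b : formula C Fn Pr)
| FEx (x : nat) (a : formula C Fn Pr)
| FAll (x : nat) (a : formula C Fn Pr).

Arguments FLit {C Fn Pr}. Arguments FEq {C Fn Pr}. Arguments FConst {C Fn Pr}.
Arguments FAnd {C Fn Pr}. Arguments FOr {C Fn Pr}. Arguments FOtimes {C Fn Pr}.
Arguments FOplus {C Fn Pr}. Arguments FEx {C Fn Pr}. Arguments FAll {C Fn Pr}.

Section Formulas.
Context {C Fn Pr : Type}.

Fixpoint free_in (x : nat) (f : formula C Fn Pr) : Prop :=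
  match f with
  | FLit _ _ args => exists t, In t args /\ occurs x t
  | FEq _ s t => occurs x s \/ occurs x t
  | FConst _ => False
  | FAnd a b | FOr a b | FOtimes a b | FOplus a b => free_in x a \/ free_in x b
  | FEx y a | FAll y a => y <> x /\ free_in x a
  end.

Fixpoint fsubst (s : nat -> term Fn) (f : formula C Fn Pr) : formula C Fn Pr :=
  match f with
  | FLit b p args => FLit b p (map (tsubst s) args)
  | FEq b t u => FEq b (tsubst s t) (tsubst s u)
  | FConst c => FConst c
  | FAnd a b => FAnd (fsubst s a) (fsubst s b)
  | FOr a b => FOr (fsubst s a) (fsubst s b)
  | FOtimes a b => FOtimes (fsubst s a) (fsubst s b)
  | FOplus a b => FOplus (fsubst s a) (fsubst s b)
  | FEx y a => FEx y (fsubst (upd s y (Var y)) a)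
  | FAll y a => FAll y (fsubst (upd s y (Var y)) a)
  end.

Context (far : Fn -> nat) (par : Pr -> nat).

Fixpoint wf_formula (f : formula C Fn Pr) : Prop :=
  match f with
  | FLit _ p args => length args = par p /\ Forall (fun t => wfterm far t = true) args
  | FEq _ s t => wfterm far s = true /\ wfterm far t = true
  | FConst _ => True
  | FAnd a b | FOr a b | FOtimes a b | FOplus a b => wf_formula a /\ wf_formula b
  | FEx _ a | FAll _ a => wf_formula a
  end.

End Formulas.

Record clause (C Fn Pr : Type) := Clause {
  chead : Pr;
  cvars : list nat;
  cbody : formula C Fn Pr
}.
Arguments chead {C Fn Pr}. Arguments cvars {C Fn Pr}. Arguments cbody {C Fn Pr}.

Definition program (B : bilattice) (Fn Pr : Type) := list (clause (bcar B) Fn Pr).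

Definition wf_clause {C Fn Pr : Type} (far : Fn -> nat) (par : Pr -> nat)
  (c : clause C Fn Pr) : Prop :=
  length (cvars c) = par (chead c) /\
  wf_formula far par (cbody c) /\
  (forall x, free_in x (cbody c) -> In x (cvars c)).

(* a Fitting program: finite set of clauses, no predicate letter heading
   more than one clause *)
Definition fitting_program {B : bilattice} {Fn Pr : Type} (far : Fn -> nat)
  (par : Pr -> nat) (P : program B Fn Pr) : Prop :=
  (forall c, In c P -> wf_clause far par c) /\ NoDup (map chead P).

Section Semantics.
Context {B : bilattice} {Fn Pr : Type} (far : Fn -> nat) (par : Pr -> nat).

Definition valuation : Type := gatom far par -> bcar B.

Definition vle_t (v w : valuation) : Prop := forall A, le_t (v A) (w A).
Definition vle_k (v w : valuation) : Prop := forall A, le_k (v A) (w A).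

Definition vop (O : (bcar B -> Prop) -> bcar B) (S : valuation -> Prop) : valuation :=
  fun A => O (fun z => exists u, S u /\ z = u A).

(* value of an atom: v(A) if A is ground (for closed well-formed formulas
   this is always the case) *)
Definition atomval (v : valuation) (a : atom) : bcar B :=
  sup_k (fun z => exists h : gatomb far par a = true, z = v (exist _ a h)).

(* value of equal(s,t): T if s = t, F otherwise *)
Definition eqval (s t : term Fn) : bcar B := sup_t (fun z => s = t /\ z = bT).

(* contrajoin v /\ w: A gets v(A), ~A gets ~w(A).  Evaluated with an
   environment rho of closed terms; quantifiers range over closed terms. *)
Fixpoint ceval (v w : valuation) (rho : nat -> term Fn)
  (f : formula (bcar B) Fn Pr) : bcar B :=
  match f with
  | FLit true p args => atomval v (p, map (tsubst rho) args)
  | FLit false p args => neg (atomval w (p, map (tsubst rho) args))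
  | FEq true s t => eqval (tsubst rho s) (tsubst rho t)
  | FEq false s t => neg (eqval (tsubst rho s) (tsubst rho t))
  | FConst c => c
  | FAnd a b => bin inf_t (ceval v w rho a) (ceval v w rho b)
  | FOr a b => bin sup_t (ceval v w rho a) (ceval v w rho b)
  | FOtimes a b => bin inf_k (ceval v w rho a) (ceval v w rho b)
  | FOplus a b => bin sup_k (ceval v w rho a) (ceval v w rho b)
  | FEx x a => sup_t (fun z => exists t, gterm far t = true /\ z = ceval v w (upd rho x t) a)
  | FAll x a => inf_t (fun z => exists t, gterm far t = true /\ z = ceval v w (upd rho x t) a)
  end.

Definition contrajoin (v w : valuation) (f : formula (bcar B) Fn Pr) : bcar B :=
  ceval v w Var f.

Variable P : program B Fn Pr.

Definition inst (A : gatom far par) (Bd : formula (bcar B) Fn Pr) : Prop :=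
  exists c, In c P /\ exists s : nat -> term Fn,
    (forall n, gterm far (s n) = true) /\
    proj1_sig A = (chead c, map (tsubst s) (map Var (cvars c))) /\
    Bd = fsubst s (cbody c).

(* Psi^alpha_P(v,w).  Since each ground atom heads at most one member of
   Inst-P, the <=_k-join below is over a singleton. *)
Definition Psi (a : alpha) (v w : valuation) : valuation :=
  fun A => sup_k (fun z =>
    (exists Bd, inst A Bd /\ z = contrajoin v w Bd) \/
    ((~ exists Bd, inst A Bd) /\ z = alpha_val a)).

Definition lfp_t (f : valuation -> valuation) : valuation := vop inf_t (fun x => vle_t (f x) x).
Definition gfp_t (f : valuation -> valuation) : valuation := vop sup_t (fun x => vle_t x (f x)).
Definition lfp_k (f : valuation -> valuation) : valuation := vop inf_k (fun x => vle_k (f x) x).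
Definition gfp_k (f : valuation -> valuation) : valuation := vop sup_k (fun x => vle_k x (f x)).

Definition Psi' (a : alpha) (v : valuation) : valuation :=
  let f := fun x => Psi a x v in
  match a with
  | aF => lfp_t f
  | aT => gfp_t f
  | aU => lfp_k f
  | aI => gfp_k f
  end.

End Semantics.

(** The theorem is Knaster–Tarski in the complete lattice (V(B), ≤_k), once
    v ↦ Psi'^α(v) is known to be ≤_k-monotone.  By interlacing, Psi^α(x, v) is
    ≤_t-monotone in x and ≤_k-monotone in both x and v.  For α = U, I the
    fixpoint defining Psi' is taken in ≤_k itself, so monotonicity is
    immediate.  For α = F, T the ≤_t-least fixpoints for v ≤_k v' are compared
    by running the two transfinite iterations in lockstep: corresponding stages
    stay ≤_k-related because ⋁ (resp. ⋀) is ≤_k-monotone, and the limit pair is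
    the pair of least fixpoints. *)

From Stdlib Require Import FunctionalExtensionality PropExtensionality.
From Stdlib Require Import Program.Basics.

Lemma pred_ext {T : Type} {S S' : T -> Prop} : (forall z, S z <-> S' z) -> S = S'.
Proof.
  intros H. apply functional_extensionality. intros z.
  apply propositional_extensionality, H.
Qed.

Lemma porder_flip {T : Type} (R : T -> T -> Prop) : is_porder R -> is_porder (flip R).
Proof. intros [Hrefl [Htrans Hanti]]; unfold flip; split; [|split]; eauto. Qed.

Section FamilyMonotone.
Context {T : Type} (O : (T -> Prop) -> T) (R : T -> T -> Prop).
Hypothesis O_mono : fam_mono O R.

Lemma fam_mono_img (I : Type) (f g : I -> T) (S S' : T -> Prop) :
  (forall z, S z <-> img f z) -> (forall z, S' z <-> img g z) ->
  (forall i, R (f i) (g i)) -> R (O S) (O S').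
Proof.
  intros HS HS' Hfg. rewrite (pred_ext HS), (pred_ext HS'). apply O_mono, Hfg.
Qed.

Lemma fam_mono_sig (I : Type) (Q : I -> Prop) (f g : I -> T) :
  (forall i, Q i -> R (f i) (g i)) ->
  R (O (fun z => exists i, Q i /\ z = f i)) (O (fun z => exists i, Q i /\ z = g i)).
Proof.
  intros Hfg.
  apply (fam_mono_img {i | Q i} (fun i => f (proj1_sig i)) (fun i => g (proj1_sig i))).
  1,2: intros z; split; [intros [i [Hi ->]]; now exists (exist _ i Hi)|].
  1,2: intros [[i Hi] ->]; eauto.
  - intros [i Hi]; auto.
Qed.

Lemma bin_mono (x y x' y' : T) : R x x' -> R y y' -> R (bin O x y) (bin O x' y').
Proof.
  intros Hx Hy.
  apply (fam_mono_img bool (fun b => if b then x else y) (fun b => if b then x' else y')).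
  1,2: intros z; split; [intros [-> | ->]; [exists true | exists false]; auto|].
  1,2: intros [[|] ->]; auto.
  - intros [|]; auto.
Qed.

End FamilyMonotone.

Definition lfp {T : Type} (R : T -> T -> Prop) (inf : (T -> Prop) -> T) (h : T -> T) : T :=
  inf (fun x => R (h x) x).

Section LeastFixpoint.
Context {T : Type} (R : T -> T -> Prop) (inf : (T -> Prop) -> T).
Hypotheses (R_porder : is_porder R) (inf_spec : is_inf R inf).

Lemma knaster_tarski (h : T -> T) : (forall x y, R x y -> R (h x) (h y)) ->
  h (lfp R inf h) = lfp R inf h /\ forall u, h u = u -> R (lfp R inf h) u.
Proof.
  destruct R_porder as [Hrefl [Htrans Hanti]]. intros Hmono.
  assert (Hpre : R (h (lfp R inf h)) (lfp R inf h)).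
  { apply (proj2 (inf_spec _)). intros p Hp.
    apply Htrans with (h p); [apply Hmono, (proj1 (inf_spec _)), Hp | exact Hp]. }
  split.
  - apply Hanti; [exact Hpre|]. apply (proj1 (inf_spec _)), Hmono, Hpre.
  - intros u Hu. apply (proj1 (inf_spec _)). rewrite Hu. apply Hrefl.
Qed.

Lemma lfp_le_pointwise (f g : T -> T) :
  (forall x, R (f x) (g x)) -> R (lfp R inf f) (lfp R inf g).
Proof.
  destruct R_porder as [_ [Htrans _]]. intros Hfg.
  apply (proj2 (inf_spec _)). intros p Hp.
  apply (proj1 (inf_spec _)). eauto.
Qed.

Lemma sup_eq_lfp (sup : (T -> Prop) -> T) (sup_spec : is_sup R sup)
  (h : T -> T) (X : T -> Prop) :
  (forall x, X x -> forall p, R (h p) p -> R x p) -> X (h (sup X)) ->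
  sup X = lfp R inf h.
Proof.
  destruct R_porder as [_ [_ Hanti]]. intros Hbelow Hnext.
  apply Hanti.
  - apply (proj2 (inf_spec _)). intros p Hp.
    apply (proj2 (sup_spec _)). intros x Hx. exact (Hbelow x Hx p Hp).
  - apply (proj1 (inf_spec _)), (proj1 (sup_spec _)), Hnext.
Qed.

End LeastFixpoint.

Section LockstepIteration.
Context {T : Type} (Rt Rk : T -> T -> Prop) (sup inf : (T -> Prop) -> T).
Hypotheses (Rt_porder : is_porder Rt) (sup_spec : is_sup Rt sup)
  (inf_spec : is_inf Rt inf) (sup_mono_k : fam_mono sup Rk).
Variables f g : T -> T.
Hypotheses (f_mono : forall x y, Rt x y -> Rt (f x) (f y))
  (g_mono : forall x y, Rt x y -> Rt (g x) (g y))
  (f_g_rel : forall x y, Rk x y -> Rk (f x) (g y)).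

(* Pairs of corresponding stages of the transfinite iterations of f and g
   from the bottom; the bottom stage is the sup of the empty family. *)
Inductive iterates : T -> T -> Prop :=
| iterates_step x y : iterates x y -> iterates (f x) (g y)
| iterates_sup (I : Type) (h1 h2 : I -> T) :
    (forall i, iterates (h1 i) (h2 i)) -> iterates (sup (img h1)) (sup (img h2)).

Lemma iterates_rel x y : iterates x y -> Rk x y.
Proof. induction 1; auto. Qed.

Lemma iterates_below_prefixpoints x y : iterates x y ->
  (forall p, Rt (f p) p -> Rt x p) /\ (forall p, Rt (g p) p -> Rt y p).
Proof.
  destruct Rt_porder as [_ [Htrans _]].
  induction 1 as [x y _ [IHx IHy] | I h1 h2 _ IH]; split; intros p Hp.
  - apply Htrans with (f p); [apply f_mono, IHx|]; exact Hp.
  - apply Htrans with (g p); [apply g_mono, IHy|]; exact Hp.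
  - apply (proj2 (sup_spec _)). intros z [i ->]. now apply (IH i).
  - apply (proj2 (sup_spec _)). intros z [i ->]. now apply (IH i).
Qed.

Lemma lfp_rel : Rk (lfp Rt inf f) (lfp Rt inf g).
Proof.
  set (I := {xy : T * T | iterates (fst xy) (snd xy)}).
  set (h1 := fun i : I => fst (proj1_sig i)).
  set (h2 := fun i : I => snd (proj1_sig i)).
  assert (Hlim : iterates (sup (img h1)) (sup (img h2))).
  { apply iterates_sup. intros [[x y] Hxy]. exact Hxy. }
  pose (next := exist _ (f (sup (img h1)), g (sup (img h2))) (iterates_step _ _ Hlim) : I).
  rewrite <- (sup_eq_lfp Rt inf Rt_porder inf_spec sup sup_spec f (img h1)),
          <- (sup_eq_lfp Rt inf Rt_porder inf_spec sup sup_spec g (img h2)).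
  - apply iterates_rel, Hlim.
  - intros y [i ->]. apply (iterates_below_prefixpoints _ _ (proj2_sig i)).
  - now exists next.
  - intros x [i ->]. apply (iterates_below_prefixpoints _ _ (proj2_sig i)).
  - now exists next.
Qed.

End LockstepIteration.

Section Pointwise.
Context {G T : Type}.

Definition pointwise (R : T -> T -> Prop) (x y : G -> T) : Prop := forall A, R (x A) (y A).

Definition pointwise_op (O : (T -> Prop) -> T) (S : (G -> T) -> Prop) : G -> T :=
  fun A => O (fun z => exists u, S u /\ z = u A).

Lemma pointwise_porder (R : T -> T -> Prop) : is_porder R -> is_porder (pointwise R).
Proof.
  intros [Hrefl [Htrans Hanti]]; unfold pointwise; split; [|split]; eauto.
  intros x y Hxy Hyx. apply functional_extensionality; auto.
Qed.

Lemma pointwise_sup R O : is_sup R O -> is_sup (pointwise R) (pointwise_op O).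
Proof.
  intros Hsup S; split.
  - intros x Sx A. apply (proj1 (Hsup _)). eauto.
  - intros y Hy A. apply (proj2 (Hsup _)). intros z [u [Su ->]]. apply Hy, Su.
Qed.

Lemma pointwise_inf R O : is_inf R O -> is_inf (pointwise R) (pointwise_op O).
Proof. exact (pointwise_sup (flip R) O). Qed.

Lemma pointwise_fam_mono O R : fam_mono O R -> fam_mono (pointwise_op O) (pointwise R).
Proof.
  intros Hmono I f g Hfg A.
  apply (fam_mono_img O R Hmono I (fun i => f i A) (fun i => g i A)); [| | intros i; apply Hfg].
  1,2: intros z; split; [intros [u [[i ->] ->]]; now exists i|].
  1,2: intros [i ->]; eexists; split; [exists i|]; reflexivity.
Qed.

End Pointwise.

Section Monotonicity.
Context {B : bilattice} {Fn Pr : Type} (far : Fn -> nat) (par : Pr -> nat).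

Lemma le_t_refl (x : B) : le_t x x.
Proof. apply le_t_porder. Qed.

Lemma le_k_refl (x : B) : le_k x x.
Proof. apply le_k_porder. Qed.

Lemma atomval_mono (R : B -> B -> Prop) (v v' : valuation far par) :
  fam_mono sup_k R -> (forall A, R (v A) (v' A)) -> forall a, R (atomval v a) (atomval v' a).
Proof. intros Hmono Hvv' a. apply Hmono. intros h; apply Hvv'. Qed.

Lemma ceval_mono (R : B -> B -> Prop) (R_refl : forall x, R x x)
  (sup_t_mono : fam_mono sup_t R) (inf_t_mono : fam_mono inf_t R)
  (sup_k_mono : fam_mono sup_k R) (inf_k_mono : fam_mono inf_k R)
  (v w v' w' : valuation far par) :
  (forall a, R (atomval v a) (atomval v' a)) ->
  (forall a, R (neg (atomval w a)) (neg (atomval w' a))) ->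
  forall f rho, R (ceval v w rho f) (ceval v' w' rho f).
Proof.
  intros Hpos Hneg f. induction f; intros rho; simpl.
  1,2: destruct pos; auto.
  1: apply R_refl.
  1-4: apply bin_mono; auto.
  1,2: apply fam_mono_sig; auto.
Qed.

Variable P : program B Fn Pr.

Lemma Psi_mono (R : B -> B -> Prop) (R_refl : forall x, R x x)
  (sup_k_mono : fam_mono sup_k R) (al : alpha) (x w x' w' : valuation far par) :
  (forall Bd, R (contrajoin x w Bd) (contrajoin x' w' Bd)) ->
  pointwise R (Psi P al x w) (Psi P al x' w').
Proof.
  intros Hbody A.
  set (I := ({Bd | inst P A Bd} + ~ exists Bd, inst P A Bd)%type).
  apply (fam_mono_img sup_k R sup_k_mono I
    (fun i => match i with inl Bd => contrajoin x w (proj1_sig Bd) | inr _ => alpha_val al end)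
    (fun i => match i with inl Bd => contrajoin x' w' (proj1_sig Bd) | inr _ => alpha_val al end)).
  1,2: intros z; split.
  1,3: intros [[Bd [HBd ->]] | [Hnone ->]];
         [now exists (inl (exist _ Bd HBd)) | now exists (inr Hnone)].
  1,2: intros [[[Bd HBd] | Hnone] ->]; [left | right]; eauto.
  - intros [[Bd HBd] | Hnone]; simpl; auto.
Qed.

Lemma Psi_mono_t (al : alpha) (x y v : valuation far par) :
  vle_t x y -> vle_t (Psi P al x v) (Psi P al y v).
Proof.
  intros Hxy. apply Psi_mono; [exact le_t_refl | apply sup_k_mono_t |].
  intros Bd. unfold contrajoin. apply ceval_mono; try exact le_t_refl.
  - apply sup_t_mono_t.
  - apply inf_t_mono_t.
  - apply sup_k_mono_t.
  - apply inf_k_mono_t.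
  - apply atomval_mono; [apply sup_k_mono_t | exact Hxy].
  - intros a. apply le_t_refl.
Qed.

Lemma Psi_mono_k (al : alpha) (x y v v' : valuation far par) :
  vle_k x y -> vle_k v v' -> vle_k (Psi P al x v) (Psi P al y v').
Proof.
  intros Hxy Hvv'. apply Psi_mono; [exact le_k_refl | apply sup_k_mono_k |].
  intros Bd. unfold contrajoin. apply ceval_mono; try exact le_k_refl.
  - apply sup_t_mono_k.
  - apply inf_t_mono_k.
  - apply sup_k_mono_k.
  - apply inf_k_mono_k.
  - apply atomval_mono; [apply sup_k_mono_k | exact Hxy].
  - intros a. apply neg_mono_k, atomval_mono; [apply sup_k_mono_k | exact Hvv'].
Qed.

Lemma Psi'_mono_k (al : alpha) (v v' : valuation far par) :
  vle_k v v' -> vle_k (Psi' P al v) (Psi' P al v').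
Proof.
  intros Hvv'. destruct al; simpl.
  - apply (lfp_rel (pointwise le_t) (pointwise le_k) (pointwise_op sup_t) (pointwise_op inf_t)).
    + apply pointwise_porder, le_t_porder.
    + apply pointwise_sup, sup_t_spec.
    + apply pointwise_inf, inf_t_spec.
    + apply pointwise_fam_mono, sup_t_mono_k.
    + intros; now apply Psi_mono_t.
    + intros; now apply Psi_mono_t.
    + intros; now apply Psi_mono_k.
  - apply (lfp_rel (flip (pointwise le_t)) (pointwise le_k)
             (pointwise_op inf_t) (pointwise_op sup_t)).
    + apply porder_flip, pointwise_porder, le_t_porder.
    + apply pointwise_inf, inf_t_spec.
    + apply pointwise_sup, sup_t_spec.
    + apply pointwise_fam_mono, inf_t_mono_k.
    + intros; now apply Psi_mono_t.
    + intros; now apply Psi_mono_t.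
    + intros; now apply Psi_mono_k.
  - apply (lfp_le_pointwise (pointwise le_k) (pointwise_op inf_k)).
    + apply pointwise_porder, le_k_porder.
    + apply pointwise_inf, inf_k_spec.
    + intros x. apply Psi_mono_k; [exact (fun _ => le_k_refl _) | exact Hvv'].
  - apply (lfp_le_pointwise (flip (pointwise le_k)) (pointwise_op sup_k)).
    + apply porder_flip, pointwise_porder, le_k_porder.
    + apply pointwise_sup, sup_k_spec.
    + intros x. unfold flip. apply Psi_mono_k; [exact (fun _ => le_k_refl _) | exact Hvv'].
Qed.

End Monotonicity.

Theorem theorem2 (B : bilattice) (Fn Pr : Type) (far : Fn -> nat) (par : Pr -> nat)
  (P : program B Fn Pr) (HP : fitting_program far par P) (a : alpha) :
  (exists u : valuation far par,
      Psi' P a u = u /\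
      forall u', Psi' P a u' = u' -> vle_k u u') /\
  (exists u : valuation far par,
      Psi' P a u = u /\
      forall u', Psi' P a u' = u' -> vle_k u' u).
Proof.
  assert (Hmono : forall v v' : valuation far par,
             vle_k v v' -> vle_k (Psi' P a v) (Psi' P a v')).
  { intros v v'. apply Psi'_mono_k. }
  split.
  - destruct (knaster_tarski (pointwise le_k) (pointwise_op inf_k)
                (pointwise_porder _ (le_k_porder B)) (pointwise_inf _ _ (inf_k_spec B))
                (Psi' P a) Hmono) as [Hfix Hleast].
    eexists; split; [exact Hfix | exact Hleast].
  - destruct (knaster_tarski (flip (pointwise le_k)) (pointwise_op sup_k)
                (porder_flip _ (pointwise_porder _ (le_k_porder B)))
                (pointwise_sup _ _ (sup_k_spec B))
                (Psi' P a) (fun v v' H => Hmono v' v H)) as [Hfix Hgreatest].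
    eexists; split; [exact Hfix | exact Hgreatest].
Qed.
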